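(* Let $u_0\in\ell^\infty_+(\mathbb{Z})$ with $\frac12\le u_0\le1$. Then for every $\varepsilon>0$ there exist a creation operator $\Psi_*$ and $N_0\in\mathbb{N}$ such that $$\Big|\Lambda(\Psi_*u_0,k,N)-\tfrac12\Big|\le\varepsilon\quad\text{for all }k\in\mathbb{Z},\ N\ge N_0.$$ Furthermore, the jump sequence $d$ of $\Psi_*$ satisfies $\|d\|_\infty<\infty$, with a bound depending only on $\varepsilon$.
   Context: $\ell^\infty_+(\mathbb{Z})$: bounded nonnegative sequences. Local averages: $\Lambda(x,k,N)=\frac1{2N+1}\sum_{l=-N}^N x(k-l)$. A creation operator is given by a strictly increasing $\Psi:\mathbb{Z}\to\mathbb{Z}$; its jump sequence records the gaps $d=\Psi(k+1)-\Psi(k)-1\in\mathbb{N}_0$ (number of inserted particles between consecutive original particles), and $\Psi_*x(\Psi(k))=x(k)$, $\Psi_*x(l)=0$ for $l\notin\Psi(\mathbb{Z})$. *)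

From Stdlib Require Import Reals Lra Lia ZArith ClassicalEpsilon.
Open Scope R_scope.

Definition linf_plus (x : Z -> R) : Prop :=
  (forall k, 0 <= x k) /\ exists M, forall k, x k <= M.

Definition Lambda (x : Z -> R) (k : Z) (N : nat) : R :=
  / INR (2 * N + 1) *
  sum_f_R0 (fun i => x (k - (Z.of_nat i - Z.of_nat N))%Z) (2 * N).

Definition strictly_increasing (Psi : Z -> Z) : Prop :=
  forall k l, (k < l)%Z -> (Psi k < Psi l)%Z.

(* creation operator Psi_* : (Psi_* x)(Psi k) = x k, and 0 off the range of Psi *)
Definition push (Psi : Z -> Z) (x : Z -> R) (l : Z) : R :=
  match excluded_middle_informative (exists k, Psi k = l) with
  | left H => x (proj1_sig (constructive_indefinite_description _ H))
  | right _ => 0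
  end.

Definition jump (Psi : Z -> Z) (k : Z) : Z := (Psi (k + 1) - Psi k - 1)%Z.

From Stdlib Require Import Reals ZArith Lra Lia ClassicalEpsilon.
Open Scope R_scope.

(* Let [S] be a discrete antiderivative of [u0], [S (k+1) = S k + u0 (k+1)], and put
   the [k]-th original particle at [Psi k = up (2 S k)].  As [2 u0] takes values in
   [[1, 2]], consecutive positions differ by 1 or 2, so at most one zero is inserted
   between particles.  The pushed sequence is the discrete derivative of [S] composed
   with the index of the last particle at or left of [l], and that composite stays
   within [3/2] of [l / 2]; so every window sum of length [2N+1] is [(2N+1)/2] up to
   [3/2], and the averages converge to [1/2] uniformly in [k]. *)

Lemma strictly_increasing_succ (f : Z -> Z) :
  (forall k, (f k < f (k + 1))%Z) -> strictly_increasing f.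
Proof.
  intros f_succ k l Hkl.
  assert (Hd : forall d, (0 <= d)%Z -> (f k < f (k + 1 + d))%Z).
  { apply natlike_ind.
    - rewrite Z.add_0_r; apply f_succ.
    - intros d _ IH. specialize (f_succ (k + 1 + d)%Z).
      replace (k + 1 + Z.succ d)%Z with (k + 1 + d + 1)%Z by lia. lia. }
  replace l with (k + 1 + (l - k - 1))%Z by lia. apply Hd; lia.
Qed.

Section StrictlyIncreasing.

Variable f : Z -> Z.
Hypothesis f_incr : strictly_increasing f.

Lemma strictly_increasing_le k l : (k <= l)%Z -> (f k <= f l)%Z.
Proof.
  intros Hkl. destruct (Z.eq_dec k l) as [<-|Hne]; [lia|].
  apply Z.lt_le_incl, f_incr; lia.
Qed.

Lemma strictly_increasing_cover l : exists k, (f k <= l < f (k + 1))%Z.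
Proof.
  replace l with (f 0 + (l - f 0))%Z by lia.
  induction (l - f 0)%Z as [|d [k Hk]|d [k Hk]] using Z.peano_ind.
  - exists 0%Z. pose proof (f_incr 0%Z 1%Z ltac:(lia)). simpl. lia.
  - destruct (Z.eq_dec (f 0 + Z.succ d) (f (k + 1))) as [Heq|Hne].
    + exists (k + 1)%Z. pose proof (f_incr (k + 1)%Z (k + 1 + 1)%Z ltac:(lia)).
      rewrite <- Z.add_1_r. lia.
    + exists k. rewrite <- Z.add_1_r. lia.
  - destruct (Z.eq_dec (f 0 + d) (f k)) as [Heq|Hne].
    + exists (k - 1)%Z. pose proof (f_incr (k - 1)%Z k ltac:(lia)).
      rewrite Z.sub_add, <- Z.sub_1_r. lia.
    + exists k. rewrite <- Z.sub_1_r. lia.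
Qed.

Lemma strictly_increasing_cover_unique k j l :
  (f k <= l < f (k + 1))%Z -> (f j <= l < f (j + 1))%Z -> k = j.
Proof.
  intros Hk Hj. destruct (Z.lt_trichotomy k j) as [Hlt|[Heq|Hgt]]; [|exact Heq|].
  - pose proof (strictly_increasing_le (k + 1) j). lia.
  - pose proof (strictly_increasing_le (j + 1) k). lia.
Qed.

Definition floor_index (l : Z) : Z :=
  epsilon (inhabits 0%Z) (fun k => (f k <= l < f (k + 1))%Z).

Lemma floor_index_spec l : (f (floor_index l) <= l < f (floor_index l + 1))%Z.
Proof. exact (epsilon_spec _ _ (strictly_increasing_cover l)). Qed.

Lemma floor_index_eq k l : (f k <= l < f (k + 1))%Z -> floor_index l = k.
Proof.
  intros Hk. exact (strictly_increasing_cover_unique _ _ _ (floor_index_spec l) Hk).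
Qed.

Lemma push_image (x : Z -> R) j : push f x (f j) = x j.
Proof.
  unfold push. destruct (excluded_middle_informative _) as [H|H].
  - destruct (constructive_indefinite_description _ H) as [i Hi]; simpl.
    f_equal. destruct (Z.lt_trichotomy i j) as [Hlt|[Heq|Hgt]]; [|exact Heq|].
    + pose proof (f_incr i j Hlt). lia.
    + pose proof (f_incr j i Hgt). lia.
  - exfalso. apply H. exists j. reflexivity.
Qed.

Lemma push_not_image (x : Z -> R) l : (forall k, f k <> l) -> push f x l = 0.
Proof.
  intros Hl. unfold push.
  destruct (excluded_middle_informative _) as [[k Hk]|_]; [|reflexivity].
  exfalso. exact (Hl k Hk).
Qed.

Lemma push_eq_diff (x S : Z -> R) :
  (forall k, S (k + 1)%Z = S k + x (k + 1)%Z) ->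
  forall l, push f x l = S (floor_index l) - S (floor_index (l - 1)).
Proof.
  intros S_succ l. destruct (classic (exists j, f j = l)) as [[j <-]|Hl].
  - rewrite push_image, (floor_index_eq j), (floor_index_eq (j - 1)).
    + specialize (S_succ (j - 1)%Z). rewrite Z.sub_add in S_succ. lra.
    + pose proof (f_incr (j - 1)%Z j ltac:(lia)). rewrite Z.sub_add. lia.
    + pose proof (f_incr j (j + 1)%Z ltac:(lia)). lia.
  - rewrite push_not_image by (intros k Hk; apply Hl; exists k; exact Hk).
    pose proof (floor_index_spec l) as Hb.
    rewrite (floor_index_eq (floor_index l) (l - 1)); [ring|].
    assert (f (floor_index l) <> l) by (intros Heq; apply Hl; eexists; exact Heq).
    lia.
Qed.

End StrictlyIncreasing.

Lemma sum_f_R0_telescope (T : Z -> R) (c : Z) (n : nat) :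
  sum_f_R0 (fun i => T (c - Z.of_nat i)%Z - T (c - Z.of_nat i - 1)%Z) n
  = T c - T (c - Z.of_nat n - 1)%Z.
Proof.
  induction n as [|n IH]; cbn [sum_f_R0].
  - rewrite !Z.sub_0_r. reflexivity.
  - rewrite IH. replace (c - Z.of_nat (S n))%Z with (c - Z.of_nat n - 1)%Z by lia. ring.
Qed.

Lemma Lambda_telescope (x T : Z -> R) :
  (forall l, x l = T l - T (l - 1)%Z) ->
  forall k N,
    Lambda x k N = (T (k + Z.of_nat N)%Z - T (k - Z.of_nat N - 1)%Z) / INR (2 * N + 1).
Proof.
  intros x_diff k N. unfold Lambda.
  rewrite (sum_eq _ (fun i => T (k + Z.of_nat N - Z.of_nat i)%Z
                            - T (k + Z.of_nat N - Z.of_nat i - 1)%Z)).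
  - rewrite sum_f_R0_telescope, Nat2Z.inj_mul.
    replace (k + Z.of_nat N - (Z.of_nat 2 * Z.of_nat N) - 1)%Z with (k - Z.of_nat N - 1)%Z by lia.
    unfold Rdiv. ring.
  - intros i _. rewrite x_diff. f_equal; f_equal; lia.
Qed.

Lemma Lambda_diff_close (x T : Z -> R) (a w : R) :
  (forall l, x l = T l - T (l - 1)%Z) ->
  (forall l, a <= T l - IZR l / 2 <= a + w) ->
  forall k N, Rabs (Lambda x k N - / 2) <= w / INR (2 * N + 1).
Proof.
  intros x_diff T_strip k N. rewrite (Lambda_telescope x T x_diff).
  set (hi := (k + Z.of_nat N)%Z). set (lo := (k - Z.of_nat N - 1)%Z).
  assert (Hlen : INR (2 * N + 1) = IZR hi - IZR lo).
  { rewrite <- minus_IZR, INR_IZR_INZ. f_equal. unfold hi, lo. lia. }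
  assert (Hpos : 0 < INR (2 * N + 1)) by (apply lt_0_INR; lia).
  replace ((T hi - T lo) / INR (2 * N + 1) - / 2)
    with ((T hi - T lo - INR (2 * N + 1) / 2) / INR (2 * N + 1)) by (field; lra).
  unfold Rdiv. rewrite Rabs_mult, Rabs_inv, (Rabs_pos_eq (INR _)) by lra.
  apply Rmult_le_compat_r; [left; apply Rinv_0_lt_compat; exact Hpos|].
  apply Rabs_le. pose proof (T_strip hi). pose proof (T_strip lo). lra.
Qed.

Lemma antiderivative_exists (u : Z -> R) :
  exists S : Z -> R, forall k, S (k + 1)%Z = S k + u (k + 1)%Z.
Proof.
  exists (fun k => if (0 <=? k)%Z
                   then sum_f_R0 (fun i => u (Z.of_nat i)) (Z.to_nat k) - u 0%Z
                   else - sum_f_R0 (fun i => u (- Z.of_nat i)%Z) (Z.to_nat (- k - 1))).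
  intros k. destruct (Z.leb_spec 0 k) as [Hk|Hk].
  - rewrite (proj2 (Z.leb_le 0 (k + 1)) ltac:(lia)).
    rewrite Z2Nat.inj_add, Nat.add_1_r by lia. cbn [sum_f_R0].
    rewrite Nat2Z.inj_succ, Z2Nat.id, <- Z.add_1_r by lia. ring.
  - destruct (Z.eq_dec k (-1)) as [->|Hk1].
    + simpl. ring.
    + rewrite (proj2 (Z.leb_gt 0 (k + 1)) ltac:(lia)).
      replace (Z.to_nat (- k - 1)) with (S (Z.to_nat (- (k + 1) - 1))) by lia.
      cbn [sum_f_R0]. rewrite Nat2Z.inj_succ, Z2Nat.id by lia.
      replace (- Z.succ (- (k + 1) - 1))%Z with (k + 1)%Z by lia. ring.
Qed.

Section Creation.

Variables u S : Z -> R.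
Hypothesis u_bounds : forall k, / 2 <= u k <= 1.
Hypothesis S_succ : forall k, S (k + 1)%Z = S k + u (k + 1)%Z.

Definition creation (k : Z) : Z := up (2 * S k).

Lemma creation_bounds k : 2 * S k < IZR (creation k) <= 2 * S k + 1.
Proof. unfold creation. destruct (archimed (2 * S k)). lra. Qed.

Lemma creation_succ k : (creation k + 1 <= creation (k + 1) <= creation k + 2)%Z.
Proof.
  pose proof (creation_bounds k) as Hk. pose proof (creation_bounds (k + 1)) as Hk1.
  rewrite S_succ in Hk1. pose proof (u_bounds (k + 1)%Z).
  assert (Hgap : 0 < IZR (creation (k + 1) - creation k) < 3) by (rewrite minus_IZR; lra).
  destruct Hgap as [Hlo Hhi]. apply lt_IZR in Hlo. apply lt_IZR in Hhi. lia.
Qed.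

Lemma creation_strictly_increasing : strictly_increasing creation.
Proof. apply strictly_increasing_succ. intros k. pose proof (creation_succ k). lia. Qed.

Lemma creation_jump k : (0 <= jump creation k <= 1)%Z.
Proof. unfold jump. pose proof (creation_succ k). lia. Qed.

Lemma creation_floor_index_strip l :
  - (3 / 2) <= S (floor_index creation l) - IZR l / 2 <= 0.
Proof.
  destruct (floor_index_spec creation creation_strictly_increasing l) as [Hlo Hhi].
  set (k := floor_index creation l) in *.
  apply IZR_le in Hlo. apply IZR_lt in Hhi.
  pose proof (creation_bounds k) as Hk. pose proof (creation_bounds (k + 1)) as Hk1.
  rewrite S_succ in Hk1. pose proof (u_bounds (k + 1)%Z). lra.
Qed.

Lemma creation_Lambda k N :
  Rabs (Lambda (push creation u) k N - / 2) <= (3 / 2) / INR (2 * N + 1).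
Proof.
  apply (Lambda_diff_close _ (fun l => S (floor_index creation l)) (- (3 / 2))).
  - apply push_eq_diff; [exact creation_strictly_increasing | exact S_succ].
  - intros l. pose proof (creation_floor_index_strip l). lra.
Qed.

End Creation.

Lemma eventually_div_le (c eps : R) :
  0 < c -> 0 < eps -> exists N0, forall N, (N0 <= N)%nat -> c / INR (2 * N + 1) <= eps.
Proof.
  intros Hc Heps. destruct (archimed_cor1 (eps / c)) as [N0 [HN0 HN0pos]].
  { apply Rdiv_lt_0_compat; assumption. }
  exists N0. intros N HN.
  assert (Hle : INR N0 <= INR (2 * N + 1)) by (apply le_INR; lia).
  assert (H0 : 0 < INR N0) by (apply lt_0_INR; lia).
  apply (Rmult_lt_compat_l c) in HN0; [|exact Hc].
  replace (c * (eps / c)) with eps in HN0 by (field; lra).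
  apply Rle_trans with (c / INR N0); [|unfold Rdiv; lra].
  apply Rmult_le_compat_l; [lra|]. apply Rinv_le_contravar; assumption.
Qed.

Theorem lemma4p2 :
  forall eps : R, 0 < eps ->
  exists D : Z,
  forall u0 : Z -> R,
    linf_plus u0 ->
    (forall k, / 2 <= u0 k <= 1) ->
    exists (Psi : Z -> Z) (N0 : nat),
      strictly_increasing Psi /\
      (forall k, (0 <= jump Psi k <= D)%Z) /\
      (forall (k : Z) (N : nat), (N0 <= N)%nat ->
         Rabs (Lambda (push Psi u0) k N - / 2) <= eps).
Proof.
  intros eps Heps. exists 1%Z. intros u0 _ Hu.
  destruct (antiderivative_exists u0) as [S S_succ].
  destruct (eventually_div_le (3 / 2) eps ltac:(lra) Heps) as [N0 HN0].
  exists (creation S), N0. split; [|split].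
  - exact (creation_strictly_increasing u0 S Hu S_succ).
  - exact (creation_jump u0 S Hu S_succ).
  - intros k N HN. eapply Rle_trans.
    + exact (creation_Lambda u0 S Hu S_succ k N).
    + exact (HN0 N HN).
Qed.
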